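(* Let $G$ be a connected graph on at least $3$ vertices and let $G'$ be obtained from $G$ by splitting a vertex $v$. Then $rx_3(G')\le rx_3(G)+1$.
   Context: To split a vertex $v$ of $G$ means: replace $v$ by two new adjacent vertices $v_1,v_2$, and replace each edge $vu$ of $G$ by exactly one of the edges $v_1u$ or $v_2u$ (the other endpoint $u$ unchanged); all other edges are kept. An edge coloring may give adjacent edges the same color; a tree is rainbow if its edges have pairwise distinct colors. For a connected graph on at least $3$ vertices, $rx_3$ is the minimum number of colors in an edge coloring such that every set of $3$ vertices lies in some rainbow tree. *)

From mathcomp Require Import all_boot.
Set Implicit Arguments. Unset Strict Implicit. Unset Printing Implicit Defensive.

Definition simple_graph (T : finType) (e : rel T) : Prop :=
  symmetric e /\ irreflexive e.

Definition connected_graph (T : finType) (e : rel T) : Prop :=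
  forall x y : T, connect e x y.

Definition is_edge (T : finType) (e : rel T) (f : {set T}) : Prop :=
  exists x y : T, e x y /\ f = [set x; y].

Definition span_vertices (T : finType) (F : {set {set T}}) : {set T} :=
  \bigcup_(f in F) f.

Definition is_tree (T : finType) (e : rel T) (F : {set {set T}}) : Prop :=
  (forall f, f \in F -> is_edge e f) /\
  (forall x y, x \in span_vertices F -> y \in span_vertices F ->
     connect (fun a b => [set a; b] \in F) x y) /\
  #|F| = #|span_vertices F| - 1.

Definition rainbow (T : finType) (c : {set T} -> nat) (F : {set {set T}}) : Prop :=
  {in F &, injective c}.

Definition rx3_colouring (T : finType) (e : rel T) (k : nat)
    (c : {set T} -> nat) : Prop :=
  (forall x y, e x y -> c [set x; y] < k) /\
  (forall S : {set T}, #|S| = 3 ->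
     exists F : {set {set T}},
       [/\ is_tree e F, rainbow c F & S \subset span_vertices F]).

Definition rx3_colourable (T : finType) (e : rel T) (k : nat) : Prop :=
  exists c, rx3_colouring e k c.

Definition is_rx3 (T : finType) (e : rel T) (k : nat) : Prop :=
  rx3_colourable e k /\ forall j, rx3_colourable e j -> k <= j.

(* New vertex set is option T: Some v plays v1,
   None plays v2, Some u (u <> v) is the old u. An edge vu goes to v1 if
   side u, otherwise to v2; v1v2 is an edge; all other edges are kept. *)
Definition split_rel (T : finType) (e : rel T) (v : T) (side : T -> bool)
    : rel (option T) :=
  fun x y =>
    match x, y with
    | Some a, Some b =>
        if a == v then (b != v) && e v b && side b
        else if b == v then e v a && side a
        else e a b
    | Some a, None | None, Some a =>
        if a == v then true else e v a && ~~ side a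
    | None, None => false
    end.

From mathcomp Require Import all_boot.
From mathcomp Require Import zify.
From Stdlib Require Import Classical.
Set Implicit Arguments. Unset Strict Implicit. Unset Printing Implicit Defensive.

(* The split graph G' lives on option T: Some v is v1, None is v2, and the
   map [merge v] (= odflt v) contracts the new edge v1v2 back to v.
   Given an rx_3-colouring c of G with k colours, colour G' by giving v1v2
   the fresh colour k and every other edge f' the colour c (merge v @: f').
   A rainbow tree F of G lifts to a tree of G': each edge f of F is copied
   to the edge of G' into which it was turned by the split (lift_edge), and
   if F passes through v the edge v1v2 is added.  The lifted tree has one
   more vertex and one more edge than F, stays connected, stays rainbow
   (v1v2 carries the only colour k), and its vertices project onto those of
   F.  Any 3 vertices of G' project to at most 3 vertices of G, which we pad
   to exactly 3 and cover by a rainbow tree of G; lifting it covers the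
   original 3 vertices. *)

Lemma superset_of_card (T : finType) (A : {set T}) (n : nat) :
  #|A| <= n -> n <= #|T| -> exists B : {set T}, A \subset B /\ #|B| = n.
Proof.
move=> hA hT.
pose P (B : {set T}) := (A \subset B) && (#|B| <= n).
have PA : P A by rewrite /P subxx hA.
have [B /maxsetP [/andP [sAB hB] maxB] _] := maxset_exists PA.
exists B; split => //; apply/eqP; rewrite eqn_leq hB leqNgt; apply/negP => ltBn.
have /subsetPn [x _ xB] : ~~ ([set: T] \subset B).
  by apply/negP => /subset_leq_card; rewrite cardsT; lia.
have cardxB : #|x |: B| = #|B|.+1 by rewrite cardsU1 xB.
have xBB : x |: B = B.
  by apply: maxB; rewrite ?subsetUr // /P cardxB ltBn (subset_trans sAB (subsetUr _ _)).
by move: xB; rewrite -xBB setU11.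
Qed.

Lemma least_witness (P : nat -> Prop) (n : nat) : P n ->
  exists m, [/\ P m, (forall j, P j -> m <= j) & m <= n].
Proof.
elim/ltn_ind: n => n IH Pn.
case: (classic (exists2 j, j < n & P j)) => [[j ltjn Pj]|noSmaller].
- have [m [Pm minm lemj]] := IH j ltjn Pj.
  by exists m; split => //; exact: leq_trans lemj (ltnW ltjn).
- exists n; split => // j Pj; rewrite leqNgt; apply/negP => ltjn.
  by apply: noSmaller; exists j.
Qed.

Lemma connect_image (T T' : finType) (h : T -> T') (r : rel T) (r' : rel T') :
  (forall a b, r a b -> connect r' (h a) (h b)) ->
  forall a b, connect r a b -> connect r' (h a) (h b).
Proof.
move=> hstep a b /connectP [p]; elim: p a => [|c p IH] a /=; first by move=> _ ->.
by move=> /andP [rac pc] lastb; apply: connect_trans (hstep _ _ rac) (IH _ pc lastb).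
Qed.

Section Lift.

Variables (T : finType) (v : T) (side : T -> bool).

Definition merge (o : option T) : T := odflt v o.

Definition split_edge : {set option T} := [set Some v; None].

(* The copy of the endpoint a of an edge f of G in the split graph: v
   becomes v1 when the other endpoint of f was sent to v1, and v2 otherwise. *)
Definition copy (f : {set T}) (a : T) : option T :=
  if a == v then (if [exists u in f, side u && (u != v)] then Some v else None)
  else Some a.

Definition lift_edge (f : {set T}) : {set option T} := copy f @: f.

Definition lift_tree (F : {set {set T}}) : {set {set option T}} :=
  lift_edge @: F :|: (if v \in span_vertices F then [set split_edge] else set0).

Definition split_colouring (k : nat) (c : {set T} -> nat) (f : {set option T})
  : nat :=
  if f == split_edge then k else c (merge @: f).

Lemma merge_copy (f : {set T}) (a : T) : merge (copy f a) = a.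
Proof. by rewrite /copy; case: eqP => [->|//]; case: ifP. Qed.

Lemma merge_lift_edge (f : {set T}) : merge @: lift_edge f = f.
Proof.
rewrite /lift_edge -imset_comp (eq_imset _ (merge_copy f)).
exact: imset_id.
Qed.

Lemma lift_edge_inj : injective lift_edge.
Proof.
have lift_edgeK : cancel lift_edge (fun A => merge @: A) by exact: merge_lift_edge.
exact: can_inj lift_edgeK.
Qed.

Lemma lift_edge_pair (x y : T) :
  lift_edge [set x; y] = [set copy [set x; y] x; copy [set x; y] y].
Proof. by rewrite /lift_edge imsetU1 imset_set1. Qed.

Lemma merge_split_edge : merge @: split_edge = [set v].
Proof. by rewrite /split_edge imsetU1 imset_set1 /merge /= setUid. Qed.

Lemma lift_treeP (F : {set {set T}}) (f' : {set option T}) :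
  f' \in lift_tree F ->
  (exists2 f, f \in F & f' = lift_edge f) \/
  (f' = split_edge /\ v \in span_vertices F).
Proof.
rewrite /lift_tree in_setU => /orP [/imsetP [f fF ->]|]; first by left; exists f.
by case: ifP => vF; rewrite ?in_set0 // in_set1 => /eqP ->; right.
Qed.

Lemma span_lift_tree (F : {set {set T}}) (o : option T) :
  (o \in span_vertices (lift_tree F)) = (merge o \in span_vertices F).
Proof.
apply/bigcupP/idP.
- move=> [f' /lift_treeP [[f fF ->]|[-> vF]] o_f'].
  + by apply/bigcupP; exists f; rewrite // -(merge_lift_edge f) imset_f.
  + by move: o_f'; rewrite /split_edge !inE => /orP [] /eqP ->.
- move=> /bigcupP [f fF mo_f]; case: (eqVneq (merge o) v) => [ov|onv].
  + have vF : v \in span_vertices F by apply/bigcupP; exists f; rewrite -?ov.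
    exists split_edge; first by rewrite /lift_tree in_setU vF set11 orbT.
    by case: o ov {mo_f} => [a /= ->|_]; rewrite /split_edge !inE eqxx ?orbT.
  + exists (lift_edge f); first by rewrite /lift_tree in_setU imset_f.
    case: o onv mo_f => [a /= anv af|/=]; last by rewrite eqxx.
    by apply/imsetP; exists a; rewrite // /copy (negbTE anv).
Qed.

Lemma card_merge_preim (X : {set T}) :
  #|merge @^-1: X| = #|X| + (v \in X).
Proof.
have NoneX : None \notin [set Some x | x in X] by apply/imsetP => -[].
have SomeX a : (Some a \in [set Some x | x in X]) = (a \in X).
  exact: (mem_imset _ _ (@Some_inj _)).
case vX : (v \in X).
- have -> : merge @^-1: X = None |: [set Some x | x in X].
    by apply/setP => -[a|]; rewrite !inE /= ?SomeX ?vX.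
  by rewrite cardsU1 NoneX addnC card_imset //; exact: Some_inj.
- have -> : merge @^-1: X = [set Some x | x in X].
    by apply/setP => -[a|]; rewrite inE /= ?SomeX // vX (negbTE NoneX).
  by rewrite card_imset ?addn0 //; exact: Some_inj.
Qed.

Lemma exists_side_pair (x y : T) : x = v -> y != v ->
  [exists u in [set x; y], side u && (u != v)] = side y.
Proof.
move=> xv ynv; apply/existsP/idP => [[u]|sy]; last first.
  by exists y; rewrite !inE eqxx orbT sy ynv.
rewrite !inE => /andP [/orP [] /eqP -> /andP [su unv]] //.
by rewrite xv eqxx in unv.
Qed.

Section Graph.

Variable e : rel T.
Hypotheses (e_sym : symmetric e) (e_irr : irreflexive e).

Lemma copy_split_rel (x y : T) : e x y ->
  split_rel e v side (copy [set x; y] x) (copy [set x; y] y).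
Proof.
move=> exy; rewrite /copy.
case: (eqVneq x v) => [xv|xnv].
- have ynv : y != v by apply: contraTneq exy => ->; rewrite xv e_irr.
  rewrite (negbTE ynv) (exists_side_pair xv ynv); move: exy; rewrite xv => evy.
  by case: ifP => sy /=; rewrite ?eqxx ?(negbTE ynv) evy ?sy.
- case: (eqVneq y v) => [yv|ynv]; last by rewrite /= (negbTE xnv) (negbTE ynv).
  rewrite setUC (exists_side_pair yv xnv); move: exy; rewrite yv e_sym => evx.
  by case: ifP => sx /=; rewrite ?eqxx ?(negbTE xnv) evx ?sx.
Qed.

Lemma split_rel_merge (x y : option T) :
  split_rel e v side x y -> [set x; y] != split_edge -> e (merge x) (merge y).
Proof.
case: x => [a|]; case: y => [b|] //=; rewrite /split_edge /merge /=.
- case: eqP => [->|_]; first by move=> /andP [/andP [_ ->]].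
  by case: eqP => [->|_]; first by rewrite e_sym => /andP [->].
- case: eqP => [-> _|_]; first by rewrite eqxx.
  by rewrite e_sym => /andP [->].
- case: eqP => [-> _|_]; first by rewrite setUC eqxx.
  by move=> /andP [->].
Qed.

(* A lifted edge is never the new edge v1v2, since e has no loops. *)
Lemma lift_edge_neq_split (f : {set T}) : is_edge e f -> lift_edge f != split_edge.
Proof.
move=> [x [y [exy ->]]]; apply/eqP => lift_split.
have xy_v : [set x; y] = [set v].
  by rewrite -merge_split_edge -lift_split merge_lift_edge.
have /set1P xv : x \in [set v] by rewrite -xy_v set21.
have /set1P yv : y \in [set v] by rewrite -xy_v set22.
by move: exy; rewrite xv yv e_irr.
Qed.

Section Tree.

Variable F : {set {set T}}.
Hypothesis F_tree : is_tree e F.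

Lemma lift_tree_edges (f' : {set option T}) :
  f' \in lift_tree F -> is_edge (split_rel e v side) f'.
Proof.
move=> /lift_treeP [[f fF ->]|[-> _]]; last first.
  by exists (Some v), None; rewrite /= eqxx.
have [x [y [exy ->]]] := F_tree.1 f fF.
by exists (copy [set x; y] x), (copy [set x; y] y); rewrite lift_edge_pair
  copy_split_rel.
Qed.

(* Each vertex of G' in the lifted tree is joined to its contraction, and
   each edge of F becomes a walk, so connectivity of F lifts. *)
Lemma lift_tree_connected (x y : option T) :
  x \in span_vertices (lift_tree F) -> y \in span_vertices (lift_tree F) ->
  connect (fun a b => [set a; b] \in lift_tree F) x y.
Proof.
set R := fun a b : option T => [set a; b] \in lift_tree F.
have R_sym : connect_sym R by apply: sym_connect_sym => a b; rewrite /R setUC.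
have R_split : v \in span_vertices F -> R (Some v) None.
  by move=> vF; rewrite /R /lift_tree in_setU vF set11 orbT.
have R_copy (a : T) (f : {set T}) : a \in f -> f \in F -> connect R (Some a) (copy f a).
  move=> af fF; rewrite /copy; case: (eqVneq a v) => [av|//].
  have vF : v \in span_vertices F by apply/bigcupP; exists f; rewrite -?av.
  by rewrite av; case: ifP => _; rewrite ?connect0 ?connect1 ?R_split.
have R_edge (a b : T) : [set a; b] \in F -> connect R (Some a) (Some b).
  move=> abF; apply: connect_trans (R_copy a _ (set21 a b) abF) _.
  rewrite R_sym; apply: connect_trans (R_copy b _ (set22 a b) abF) _.
  by rewrite R_sym connect1 // /R -lift_edge_pair /lift_tree in_setU imset_f.
have R_merge (o : option T) : o \in span_vertices (lift_tree F) -> connect R (Some (merge o)) o.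
  case: o => [a _|]; first exact: connect0.
  by rewrite span_lift_tree => vF; rewrite connect1 ?R_split.
move=> xF yF; apply: connect_trans (_ : connect R x (Some (merge x))) _.
  by rewrite R_sym R_merge.
apply: connect_trans (R_merge y yF).
apply: (connect_image (h := Some)) R_edge _ _ _.
by apply: F_tree.2.1; rewrite -span_lift_tree.
Qed.

(* The lift adds v1v2 exactly when it adds the vertex v2 = None. *)
Lemma lift_tree_card :
  #|lift_tree F| = #|span_vertices (lift_tree F)| - 1.
Proof.
have -> : span_vertices (lift_tree F) = merge @^-1: span_vertices F.
  by apply/setP => o; rewrite inE span_lift_tree.
have notsplit : split_edge \notin lift_edge @: F.
  apply/imsetP => -[f fF fsplit].
  by move: (lift_edge_neq_split (F_tree.1 f fF)); rewrite -fsplit eqxx.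
have cardF := F_tree.2.2.
rewrite card_merge_preim /lift_tree.
case vF : (v \in span_vertices F).
- rewrite setUC cardsU1 notsplit card_imset; last exact: lift_edge_inj.
  have : 0 < #|span_vertices F| by apply/card_gt0P; exists v.
  rewrite /= cardF; lia.
- by rewrite setU0 card_imset /= ?addn0 //; exact: lift_edge_inj.
Qed.

Lemma lift_tree_is_tree : is_tree (split_rel e v side) (lift_tree F).
Proof.
split; [exact: lift_tree_edges | split; [exact: lift_tree_connected|]].
exact: lift_tree_card.
Qed.

(* The lifted edges keep their colours, all below k, and v1v2 gets k. *)
Lemma lift_tree_rainbow (k : nat) (c : {set T} -> nat) :
  (forall x y, e x y -> c [set x; y] < k) -> rainbow c F ->
  rainbow (split_colouring k c) (lift_tree F).
Proof.
move=> c_lt F_rainbow.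
have colour_lift f : f \in F -> split_colouring k c (lift_edge f) = c f.
  move=> fF; rewrite /split_colouring merge_lift_edge.
  by rewrite (negbTE (lift_edge_neq_split (F_tree.1 f fF))).
have colour_lt f : f \in F -> c f < k.
  by move=> /(F_tree.1) [x [y [exy ->]]]; exact: c_lt.
have colour_split : split_colouring k c split_edge = k.
  by rewrite /split_colouring eqxx.
move=> f1 f2 /lift_treeP [[g1 g1F ->]|[-> _]] /lift_treeP [[g2 g2F ->]|[-> _]] //.
- by rewrite !colour_lift // => /F_rainbow ->.
- by rewrite colour_lift // colour_split => c1k; move: (colour_lt _ g1F); rewrite c1k ltnn.
- by rewrite colour_lift // colour_split => c2k; move: (colour_lt _ g2F); rewrite c2k ltnn.
Qed.

End Tree.

Lemma split_rx3_colouring (k : nat) (c : {set T} -> nat) :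
  3 <= #|T| -> rx3_colouring e k c ->
  rx3_colouring (split_rel e v side) k.+1 (split_colouring k c).
Proof.
move=> card_T [c_lt c_trees]; split.
- move=> x y exy; rewrite /split_colouring; case: ifP => // /negbT xy_new.
  by rewrite ltnS ltnW // imsetU1 imset_set1 c_lt // split_rel_merge.
- move=> S' cardS'.
  have [S [S'S cardS]] : exists S : {set T}, merge @: S' \subset S /\ #|S| = 3.
    by apply: superset_of_card; rewrite // -cardS' leq_imset_card.
  have [F [F_tree F_rainbow S_F]] := c_trees S cardS.
  exists (lift_tree F); split.
  + exact: lift_tree_is_tree.
  + exact: lift_tree_rainbow.
  + apply/subsetP => o oS'; rewrite span_lift_tree.
    by apply: (subsetP S_F); apply: (subsetP S'S); exact: imset_f.
Qed.

End Graph.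

End Lift.

Theorem theorem9 (T : finType) (e : rel T) (v : T) (side : T -> bool) (k : nat) :
  simple_graph e -> connected_graph e -> 3 <= #|T| ->
  is_rx3 e k ->
  exists k', is_rx3 (split_rel e v side) k' /\ k' <= k.+1.
Proof.
move=> [e_sym e_irr] _ card_T [[c c_rx3] _].
have split_colourable : rx3_colourable (split_rel e v side) k.+1.
  by exists (split_colouring v k c); exact: split_rx3_colouring.
have [m [m_colourable m_least le_m]] := least_witness split_colourable.
by exists m.
Qed.
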